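(* Fix $M>0$ and let $\mathcal{A}$ be the class of functions $m\in W^{1,2}(0,1)$ with $\int_0^1e^{m}\,dx=M$. Then for every sufficiently small $\delta>0$ and every continuous function $h_\delta:[0,\infty)\to\mathbb{R}$, the inequality $$\int_0^1e^{2m}\,dx<\delta M^2\int_0^1|m_x|^2\,dx+h_\delta\Big(\int_0^1e^m\,dx\Big)$$ does not hold for all $m\in\mathcal{A}$. *)

From HB Require Import structures.
From mathcomp Require Import all_boot all_order all_algebra.
From mathcomp Require Import all_classical all_reals all_analysis.
Set Implicit Arguments. Unset Strict Implicit. Unset Printing Implicit Defensive.
Import Order.TTheory GRing.Theory Num.Theory.
Import numFieldNormedType.Exports.
Local Open Scope classical_set_scope.
Local Open Scope ring_scope.

Definition I01 {R : realType} : set R := `]0, 1[%classic.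

Definition test_fun {R : realType} (phi : R -> R) : Prop :=
  (forall (n : nat) (x : R), derivable (iter n (@derive1 R R^o) phi) x 1) /\
  exists a b : R, [/\ 0 < a, a < b, b < 1 &
    forall x, x < a \/ b < x -> phi x = 0].

Definition L2_01 {R : realType} (u : R -> R) : Prop :=
  measurable_fun I01 u /\
  (\int[lebesgue_measure]_(x in I01) ((u x) ^+ 2)%:E < +oo)%E.

(* m belongs to W^{1,2}(0,1) and g is (a representative of) its weak
   derivative m_x:  m, g in L^2(0,1) and
   int_0^1 m phi' = - int_0^1 g phi  for every test function phi. *)
Definition W12_weak_deriv {R : realType} (m g : R -> R) : Prop :=
  [/\ L2_01 m, L2_01 g &
    forall phi : R -> R, test_fun phi ->
      Rintegral lebesgue_measure I01 (fun x => m x * @derive1 R R^o phi x)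
      = - Rintegral lebesgue_measure I01 (fun x => g x * phi x)].

From HB Require Import structures.
From mathcomp Require Import all_boot all_order all_algebra.
From mathcomp Require Import all_classical all_reals all_analysis.
From mathcomp Require Import ring lra.
Import Order.TTheory GRing.Theory Num.Theory.
Import numFieldNormedType.Exports.
Local Open Scope classical_set_scope.
Local Open Scope ring_scope.

(* For [m = ln c - 2 ln (x + a)] one has [e^m = c / (x + a)^2], so
   [c = M a (1 + a)] gives [int e^m = M], while [int e^(2m) ~ M^2 / (3 a)] and
   [int m_x^2 ~ 4 / a] as [a -> 0]. For [delta < 1/24] the left-hand side thus
   exceeds [delta M^2 int m_x^2] by more than [M^2 / (6 a (1 + a))], which beats
   the fixed value [h M] once [a] is small. *)

Section unit_interval_calculus.
Context {R : realType}.
Notation mu := (@lebesgue_measure R).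

Lemma is_derive_continuous (F : R -> R) (x df : R) :
  is_derive x 1 F df -> {for x, continuous F}.
Proof.
by move=> dF; apply: differentiable_continuous; apply/derivable1_diffP.
Qed.

Lemma continuous_within01 (f : R -> R) :
  {in `[0, 1], continuous f} -> {within `[0, 1], continuous f}.
Proof. by move=> cf; apply: continuous_in_subspaceT => x; rewrite inE; exact: cf. Qed.

Lemma continuous01_integrable (f : R -> R) (D : set R) :
  measurable D -> D `<=` `[0, 1] -> {in `[0, 1], continuous f} ->
  mu.-integrable D (EFin \o f).
Proof.
move=> mD sD cf.
have icf : mu.-integrable `[0, 1] (EFin \o f).
  apply: continuous_compact_integrable; first exact: segment_compact.
  exact: continuous_within01.
exact: (integrableS _ _ _ icf).
Qed.

Lemma integral_I01_itvcc (f : R -> R) : {in `[0, 1], continuous f} ->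
  (\int[mu]_(x in I01) (f x)%:E = \int[mu]_(x in `[0%R, 1%R]) (f x)%:E)%E.
Proof.
move=> cf; rewrite /I01 (@integral_itv_bndo_bndc _ (BRight 0)); last first.
  have sD : `]0, 1[ `<=` (`[0, 1] : set R) by move=> x /=; exact: subset_itv_oo_cc.
  by have /integrableP[] := continuous01_integrable _ _ (measurable_itv _) sD cf.
rewrite (@integral_itv_obnd_cbnd _ 0 (BRight 1)) //.
have sD : `]0, 1] `<=` (`[0, 1] : set R) by move=> x /=; exact: subset_itv_oc_cc.
by have /integrableP[] := continuous01_integrable _ _ (measurable_itv _) sD cf.
Qed.

Lemma Rintegral_I01_itvcc (f : R -> R) : {in `[0, 1], continuous f} ->
  Rintegral mu I01 f = Rintegral mu `[0, 1] f.
Proof. by move=> cf; rewrite /Rintegral integral_I01_itvcc. Qed.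

Lemma continuous01_L2 (f : R -> R) : {in `[0, 1], continuous f} -> L2_01 f.
Proof.
have sI01 : I01 `<=` (`[0, 1] : set R) by move=> x; exact: subset_itv_oo_cc.
move=> cf; have /integrableP[mf _] := continuous01_integrable _ _ (measurable_itv _) sI01 cf.
split; first exact/measurable_realfun.measurable_EFinP.
have cf2 : {in `[0, 1], continuous (fun x => f x ^+ 2)}.
  by move=> x x01; apply: continuousM; exact: cf.
have /integrableP[_] := continuous01_integrable _ _ (measurable_itv _) sI01 cf2.
by under eq_integral do rewrite /= ger0_norm ?sqr_ge0//.
Qed.

Section derivative_on01.
Context {F f : R -> R}.
Hypothesis dF : forall x : R, x \in `[0, 1] -> is_derive x 1 F (f x).

Lemma derivable_oo_LRcontinuous01 : derivable_oo_LRcontinuous F 0 1.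
Proof.
have cF (x : R) : x \in `[0, 1] -> {for x, continuous F}.
  by move=> /dF; exact: is_derive_continuous.
split.
- by move=> x /subset_itv_oo_cc /dF dFx; exact: (@ex_derive _ _ _ _ _ _ (f x)).
- by apply: cvg_at_right_filter; apply: cF; rewrite in_itv /= lexx ler01.
- by apply: cvg_at_left_filter; apply: cF; rewrite in_itv /= lexx ler01.
Qed.

Lemma derive1_itvoo01 : {in `]0, 1[, F^`()%classic =1 f}.
Proof.
by move=> x /subset_itv_oo_cc /dF dFx; rewrite derive1E derive_val.
Qed.

Lemma integral_I01_derive : {in `[0, 1], continuous f} ->
  (\int[mu]_(x in I01) (f x)%:E = (F 1 - F 0)%:E)%E.
Proof.
move=> cf; rewrite integral_I01_itvcc // EFinB; apply: continuous_FTC2 => //.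
- exact: continuous_within01.
- exact: derivable_oo_LRcontinuous01.
- exact: derive1_itvoo01.
Qed.

End derivative_on01.

Lemma test_fun_derive {phi : R -> R} (x : R) : test_fun phi ->
  is_derive x 1 phi (phi^`()%classic x).
Proof. by move=> [dphi _]; rewrite derive1E; exact: derivableP (dphi 0%N x). Qed.

Lemma test_fun_derive_continuous {phi : R -> R} : test_fun phi ->
  continuous (phi^`()%classic).
Proof.
by move=> [dphi _] x; apply: is_derive_continuous; exact: derivableP (dphi 1%N x).
Qed.

Lemma test_fun_vanishes01 {phi : R -> R} : test_fun phi -> phi 0 = 0 /\ phi 1 = 0.
Proof.
by move=> [_ [p [q [p0 pq q1 phi0]]]]; split; apply: phi0; [left | right].
Qed.

Lemma W12_weak_deriv_C1 (F f : R -> R) :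
  (forall x : R, x \in `[0, 1] -> is_derive x 1 F (f x)) ->
  {in `[0, 1], continuous f} -> W12_weak_deriv F f.
Proof.
move=> dF cf; have cF : {in `[0, 1], continuous F}.
  by move=> x /dF; exact: is_derive_continuous.
split; [exact: continuous01_L2 | exact: continuous01_L2 |].
move=> phi tphi; have [phi0 phi1] := test_fun_vanishes01 tphi.
have dphi (x : R) : x \in `[0, 1] -> is_derive x 1 phi (phi^`()%classic x).
  by move=> _; exact: test_fun_derive.
have cphi' := test_fun_derive_continuous tphi.
have cphi : {in `[0, 1], continuous phi} by move=> x /dphi; exact: is_derive_continuous.
have cFphi' : {in `[0, 1], continuous (fun x => F x * phi^`()%classic x)}.
  by move=> x x01; apply: continuousM; [exact: cF | exact: cphi'].
have cfphi : {in `[0, 1], continuous (fun x => f x * phi x)}.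
  by move=> x x01; apply: continuousM; [exact: cf | exact: cphi].
rewrite !Rintegral_I01_itvcc //.
rewrite (Rintegration_by_parts (f := f) (G := phi) ltr01) ?phi0 ?phi1 ?mulr0 ?subrr ?sub0r //.
- exact: continuous_within01.
- exact: derivable_oo_LRcontinuous01 dF.
- exact: derive1_itvoo01 dF.
- by apply: continuous_within01 => x _; exact: cphi'.
- exact: derivable_oo_LRcontinuous01 dphi.
Qed.

Lemma is_derive_inv_powD (a x : R) (n : nat) : 0 < x + a ->
  is_derive x 1 (fun y => ((y + a) ^+ n.+1)^-1) (- n.+1%:R / (x + a) ^+ n.+2).
Proof.
move=> xa; have xa0 : x + a != 0 by rewrite gt_eqF.
have dpow := @is_deriveX R R (shift a) n.+1 x 1 1 (is_derive_shift x 1 a).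
rewrite exprfctE in dpow.
have := @is_deriveV R (fun y => shift a y ^+ n.+1) x _ 1 (expf_neq0 _ xa0) dpow.
move=> dinv; apply: (is_derive_eq dinv) => /=.
rewrite /GRing.scale /= mulr1 !exprS; field.
by rewrite xa0 expf_neq0.
Qed.

Lemma integral_I01_inv_powD (a r : R) (n : nat) : 0 < a ->
  (\int[mu]_(x in I01) (r / (x + a) ^+ n.+2)%:E
   = (r / n.+1%:R * ((a ^+ n.+1)^-1 - ((1 + a) ^+ n.+1)^-1))%:E)%E.
Proof.
move=> a0; have xa (x : R) : x \in `[0, 1] -> 0 < x + a.
  by rewrite in_itv /= => /andP[x0 _]; exact: ltr_wpDl.
have n1 : 1 + n%:R != 0 :> R by rewrite nat1r pnatr_eq0.
have dF (x : R) : x \in `[0, 1] -> is_derive x 1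
    (fun y => - (r / n.+1%:R) * ((y + a) ^+ n.+1)^-1) (r / (x + a) ^+ n.+2).
  move=> /xa xa0; have := is_deriveZ (- (r / n.+1%:R)) (is_derive_inv_powD _ _ n xa0).
  move=> dF; apply: (is_derive_eq dF).
  by rewrite /GRing.scale /=; field; rewrite n1 expf_neq0 ?gt_eqF.
rewrite (integral_I01_derive dF); last first.
  move=> x /xa xa0; apply: (continuousM (s := fun=> r) (t := fun y => ((y + a) ^+ n.+2)^-1)).
    exact: cst_continuous.
  exact: is_derive_continuous (is_derive_inv_powD _ _ n.+1 xa0).
congr EFin; rewrite add0r addrC; field.
by rewrite n1 !expf_neq0 ?gt_eqF //; lra.
Qed.

End unit_interval_calculus.

Section log_bump.
Context {R : realType}.
Notation mu := (@lebesgue_measure R).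
Variables (a c : R).
Hypotheses (a0 : 0 < a) (c0 : 0 < c).

Definition log_bump (x : R) := ln c - 2 * ln (x + a).
Definition log_bump_dx (x : R) := - 2 / (x + a).

Let shift_gt0 (x : R) : x \in `[0, 1] -> 0 < x + a.
Proof. by rewrite in_itv /= => /andP[x0 _]; exact: ltr_wpDl. Qed.

Let I01_shift_gt0 (x : R) : x \in I01 -> 0 < x + a.
Proof. by rewrite /I01 inE /= in_itv /= => /andP[x0 _]; rewrite ltr_wpDl ?ltW. Qed.

Lemma is_derive_log_bump (x : R) : 0 < x + a -> is_derive x 1 log_bump (log_bump_dx x).
Proof.
move=> xa; have dln : is_derive x 1 (@ln R \o shift a) ((x + a)^-1 * 1) :=
  @is_derive1_comp R (@ln R) (shift a) x _ _ (is_derive1_ln xa) (is_derive_shift x 1 a).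
apply: (is_derive_eq (is_deriveB (is_derive_cst (ln c) x 1) (is_deriveZ 2 dln))).
by rewrite /log_bump_dx /GRing.scale /= mulr1 sub0r mulNr.
Qed.

Lemma W12_log_bump : W12_weak_deriv log_bump log_bump_dx.
Proof.
apply: W12_weak_deriv_C1 => [x /shift_gt0|x /shift_gt0 xa]; first exact: is_derive_log_bump.
apply: (continuousM (s := fun=> -2) (t := fun y => (y + a)^-1)).
  exact: cst_continuous.
exact: is_derive_continuous (is_derive_inv_powD _ _ 0 xa).
Qed.

Lemma expR_log_bump (x : R) : 0 < x + a -> expR (log_bump x) = c / (x + a) ^+ 2.
Proof. by move=> xa; rewrite expRB expRM_natl !lnK ?posrE. Qed.

Lemma integral_expR_log_bump :
  (\int[mu]_(x in I01) (expR (log_bump x))%:E = (c / (a * (1 + a)))%:E)%E.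
Proof.
under eq_integral => x /I01_shift_gt0 xa do rewrite expR_log_bump //.
rewrite integral_I01_inv_powD //; congr EFin; field.
by rewrite !gt_eqF ?addr_gt0.
Qed.

Lemma integral_expR2_log_bump :
  (\int[mu]_(x in I01) (expR (2 * log_bump x))%:E
   = (c ^+ 2 * (1 + 3 * a + 3 * a ^+ 2) / (3 * (a * (1 + a)) ^+ 3))%:E)%E.
Proof.
under eq_integral => x /I01_shift_gt0 xa.
  rewrite expRM_natl expR_log_bump // -[_ ^+ 2]/(_ * _) mulf_div -exprD.
  over.
rewrite integral_I01_inv_powD //; congr EFin; field.
by rewrite !gt_eqF ?addr_gt0.
Qed.

Lemma integral_sqr_log_bump_dx :
  (\int[mu]_(x in I01) (log_bump_dx x ^+ 2)%:E = (4 / (a * (1 + a)))%:E)%E.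
Proof.
under eq_integral => x _ do rewrite /log_bump_dx expr_div_n sqrrN.
rewrite integral_I01_inv_powD //; congr EFin; field.
by rewrite !gt_eqF ?addr_gt0.
Qed.

End log_bump.

(* After multiplying by [p = a (1 + a)], the left side is [4 delta M^2 + C p] and
   the right side is at least [M^2 / 3]; the constraint on [a] forces [|C| p <= M^2 / 6]. *)
Lemma log_bump_energy_gap (R : realFieldType) (M C delta a : R) :
  0 < M -> 0 < delta -> delta < 1 / 24 -> 0 < a ->
  6 * a * (`|C| + M ^+ 2) = M ^+ 2 ->
  delta * M ^+ 2 * (4 / (a * (1 + a))) + C
    <= (M * a * (1 + a)) ^+ 2 * (1 + 3 * a + 3 * a ^+ 2) / (3 * (a * (1 + a)) ^+ 3).
Proof.
move=> M0 d0 d1 a0 ha.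
have p0 : 0 < a * (1 + a) by rewrite mulr_gt0 // addr_gt0.
have -> : (M * a * (1 + a)) ^+ 2 * (1 + 3 * a + 3 * a ^+ 2) / (3 * (a * (1 + a)) ^+ 3)
    = M ^+ 2 * (1 + 3 * a + 3 * a ^+ 2) / 3 / (a * (1 + a)).
  by field; rewrite !gt_eqF ?addr_gt0.
rewrite ler_pdivlMr // mulrDl.
have -> : delta * M ^+ 2 * (4 / (a * (1 + a))) * (a * (1 + a)) = 4 * delta * M ^+ 2.
  by field; rewrite !gt_eqF ?addr_gt0.
have hC : C * (a * (1 + a)) <= (M ^+ 2 / 6 - M ^+ 2 * a) * (1 + a).
  have -> : (M ^+ 2 / 6 - M ^+ 2 * a) * (1 + a) = `|C| * (a * (1 + a)).
    by rewrite mulrA; congr (_ * _); lra.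
  by rewrite ler_pM2r ?ler_norm.
have hM2 : 0 < M ^+ 2 by rewrite exprn_gt0.
nra.
Qed.

Theorem lemma4 (R : realType) (M : R) (hM : 0 < M) :
  exists delta0 : R, 0 < delta0 /\
  forall delta : R, 0 < delta -> delta < delta0 ->
  forall h : R -> R, {within `[0, +oo[%classic, continuous h} ->
  ~ (forall m mx : R -> R,
       W12_weak_deriv m mx ->
       (\int[lebesgue_measure]_(x in I01) (expR (m x))%:E = M%:E)%E ->
       (\int[lebesgue_measure]_(x in I01) (expR (2 * m x))%:E
        < (delta * M ^+ 2)%:E
            * \int[lebesgue_measure]_(x in I01) ((mx x) ^+ 2)%:E
          + (h (fine (\int[lebesgue_measure]_(x in I01) (expR (m x))%:E)))%:E)%E).
Proof.
exists (1 / 24); split; first lra.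
move=> delta delta0 delta_small h _ energy_bound.
have M2 : 0 < M ^+ 2 by rewrite exprn_gt0.
pose a := M ^+ 2 / (6 * (`|h M| + M ^+ 2)).
have a0 : 0 < a by rewrite divr_gt0 // mulr_gt0 // ltr_wpDl.
have ha : 6 * a * (`|h M| + M ^+ 2) = M ^+ 2.
  by rewrite /a [6 * _]mulrC -mulrA mulfVK // gt_eqF // mulr_gt0 // ltr_wpDl.
pose c := M * a * (1 + a).
have c0 : 0 < c by rewrite /c; apply: mulr_gt0; [exact: mulr_gt0 | exact: addr_gt0].
have mass : (\int[lebesgue_measure]_(x in I01) (expR (log_bump a c x))%:E = M%:E)%E.
  by rewrite integral_expR_log_bump //; congr EFin; rewrite /c; field; rewrite !gt_eqF ?addr_gt0.
have := energy_bound _ _ (W12_log_bump a c a0) mass.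
rewrite mass integral_expR2_log_bump // integral_sqr_log_bump_dx //= -EFinM -EFinD lte_fin.
by apply/negP; rewrite -leNgt; exact: log_bump_energy_gap.
Qed.
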